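(* Let $(S,\mathfrak n,k)$ be a Noetherian local ring, $I$ an $\mathfrak n$-primary ideal, and $R=S/I$ with maximal ideal $\mathfrak m=\mathfrak n/I$. Then $$s(R)\le \ell_S(R)-\sum_{i=0}^{v_S(R)-1}h_S(i)+v_S(R)-1.$$ Moreover, if $I$ is not a power of $\mathfrak n$, the following are equivalent: 1) equality holds above; 2) $\mu(\mathfrak m^{v_S(R)})=1$; 3) the Hilbert function of $R$ satisfies $h_R(i)=h_S(i)$ for $0\le i\le v_S(R)-1$, $h_R(i)=1$ for $v_S(R)\le i\le s(R)$, and $h_R(i)=0$ for $i>s(R)$.
   Context: For an Artinian local ring $(R,\mathfrak m)$, $s(R)$ is the largest $s$ with $\mathfrak m^s\neq0$. For a local ring $(A,\mathfrak a)$, $h_A(i)=\ell_A(\mathfrak a^i/\mathfrak a^{i+1})$. $v_S(R)=\max\{n\mid I\subseteq\mathfrak n^n\}$. $\mu(M)$ is the minimal number of generators of $M$. *)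

From HB Require Import structures.
From mathcomp Require Import all_boot all_order all_algebra.
From Stdlib Require Import ClassicalEpsilon.
Set Implicit Arguments. Unset Strict Implicit. Unset Printing Implicit Defensive.
Import Order.TTheory GRing.Theory Num.Theory.
Local Open Scope ring_scope.

Definition natmax (P : nat -> Prop) : nat :=
  match excluded_middle_informative
          (exists l, P l /\ forall k, P k -> (k <= l)%N) with
  | left H => proj1_sig (constructive_indefinite_description _ H)
  | right _ => 0%N
  end.

Definition natmin (P : nat -> Prop) : nat :=
  match excluded_middle_informative
          (exists l, P l /\ forall k, P k -> (l <= k)%N) with
  | left H => proj1_sig (constructive_indefinite_description _ H)
  | right _ => 0%N
  end.

Definition is_ideal (A : comNzRingType) (J : A -> Prop) : Prop :=
  J 0 /\ (forall x y, J x -> J y -> J (x + y)) /\ (forall a x, J x -> J (a * x)).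

Definition idealpow (A : comNzRingType) (J : A -> Prop) (i : nat) (x : A) : Prop :=
  exists (m : nat) (a : 'I_m -> A) (y : 'I_m -> 'I_i -> A),
    (forall j l, J (y j l)) /\ x = \sum_(j < m) a j * \prod_(l < i) y j l.

Definition is_local (A : comNzRingType) (n : A -> Prop) : Prop :=
  is_ideal n /\ ~ n 1 /\
  (forall J, is_ideal J -> ~ J 1 -> forall x, J x -> n x).

Definition noetherian (A : comNzRingType) : Prop :=
  forall J : A -> Prop, is_ideal J ->
    exists (k : nat) (g : 'I_k -> A),
      forall x, J x <-> exists a : 'I_k -> A, x = \sum_(i < k) a i * g i.

Definition primary_to (A : comNzRingType) (I n : A -> Prop) : Prop :=
  is_ideal I /\ ~ I 1 /\
  (forall x y, I (x * y) -> ~ I x -> exists k, I (y ^+ k)) /\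
  (forall x, n x <-> exists k, I (x ^+ k)).

Definition mu (A : comNzRingType) (N : A -> Prop) : nat :=
  natmin (fun k => exists g : 'I_k -> A,
             forall x, N x <-> exists a : 'I_k -> A, x = \sum_(i < k) a i * g i).

Definition is_submod (B : comNzRingType) (M : zmodType) (act : B -> M -> M)
  (N : M -> Prop) : Prop :=
  N 0 /\ (forall x y, N x -> N y -> N (x + y)) /\ (forall x, N x -> N (- x)) /\
  (forall b x, N x -> N (act b x)).

Definition subchain (B : comNzRingType) (M : zmodType) (act : B -> M -> M)
  (K J : M -> Prop) (c : nat -> M -> Prop) (m : nat) : Prop :=
  (forall x, c 0%N x <-> K x) /\ (forall x, c m x <-> J x) /\
  (forall i, (i <= m)%N -> is_submod act (c i)) /\
  (forall i, (i < m)%N ->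
     (forall x, c i x -> c i.+1 x) /\ exists x, c i.+1 x /\ ~ c i x).

(* length of the module J/K (K <= J submodules): supremum of lengths of
   strict chains of submodules from K to J (0 if not finite). *)
Definition mlength (B : comNzRingType) (M : zmodType) (act : B -> M -> M)
  (J K : M -> Prop) : nat :=
  natmax (fun m => exists c, subchain act K J c m).

Definition hilb (A : comNzRingType) (J : A -> Prop) (i : nat) : nat :=
  mlength (fun a x : A => a * x) (idealpow J i) (idealpow J i.+1).

Definition socdeg (A : comNzRingType) (J : A -> Prop) : nat :=
  natmax (fun s => exists x, idealpow J s x /\ x <> 0).

Definition vS (A : comNzRingType) (n I : A -> Prop) : nat :=
  natmax (fun v => forall x, I x -> idealpow n v x).

From HB Require Import structures.
From mathcomp Require Import all_boot all_order all_algebra.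
From Stdlib Require Import ClassicalEpsilon FunctionalExtensionality PropExtensionality Classical.
From mathcomp Require Import zify ring.
Import Order.TTheory GRing.Theory Num.Theory.
Set Implicit Arguments. Unset Strict Implicit. Unset Printing Implicit Defensive.
Local Open Scope ring_scope.

(* Let h(i) be the S-length of m^i/m^(i+1).  Length is additive along chains
   of submodules, so l(R) = h(0) + ... + h(s); h(i) = h_S(i) for i < v since
   I <= n^(i+1); and h(i) >= 1 for i <= s since m^i = m^(i+1) forces m^i = 0.
   As v <= s + 1, this gives the bound, with equality iff h(i) = 1 for
   v <= i <= s.  That condition holds iff m^v is principal: a principal m^v
   has principal higher powers, each of colength at most one in the previous
   one; and h(v) = 1 gives m^v = (x) + m^(v+1) = ... = (x) + m^(s+1) = (x). *)

Lemma natmax_spec (P : nat -> Prop) :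
  (exists l, P l /\ forall k, P k -> (k <= l)%N) ->
  P (natmax P) /\ forall k, P k -> (k <= natmax P)%N.
Proof.
rewrite /natmax; case: excluded_middle_informative => // H _.
by case: (constructive_indefinite_description _ H) => /= l [].
Qed.

Lemma natmax_exists (P : nat -> Prop) k0 B :
  P k0 -> (forall k, P k -> (k <= B)%N) ->
  exists l, P l /\ forall k, P k -> (k <= l)%N.
Proof.
elim: B k0 => [|B IH] k0 Pk0 HB.
  exists k0; split => // k Pk; have := HB _ Pk; have := HB _ Pk0.
  by rewrite !leqn0 => /eqP -> /eqP ->.
case: (classic (P B.+1)) => [PB|nPB]; first by exists B.+1.
apply: (IH k0 Pk0) => k Pk; have := HB _ Pk.
by rewrite leq_eqVlt ltnS => /orP [/eqP Ek|//]; move: nPB; rewrite -Ek.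
Qed.

Lemma natmax_ext (P Q : nat -> Prop) : (forall l, P l <-> Q l) -> natmax P = natmax Q.
Proof.
move=> PQ; have -> // : P = Q.
by apply: functional_extensionality => l; apply: propositional_extensionality.
Qed.

Lemma natmin_eq (P : nat -> Prop) l :
  P l -> (forall k, P k -> (l <= k)%N) -> natmin P = l.
Proof.
move=> Pl Hl; rewrite /natmin; case: excluded_middle_informative => [H|[]]; last by exists l.
case: (constructive_indefinite_description _ H) => /= k [Pk Hk].
by apply/eqP; rewrite eqn_leq Hk // Hl.
Qed.

Lemma natmin_pos (P : nat -> Prop) : natmin P <> 0%N -> P (natmin P).
Proof.
rewrite /natmin; case: excluded_middle_informative => // H _.
by case: (constructive_indefinite_description _ H) => /= l [].
Qed.

Definition indicator (P : Prop) : nat := if excluded_middle_informative P then 1%N else 0%N.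

Lemma indicatorT (P : Prop) : P -> indicator P = 1%N.
Proof. by rewrite /indicator; case: excluded_middle_informative. Qed.

Lemma indicatorF (P : Prop) : ~ P -> indicator P = 0%N.
Proof. by rewrite /indicator; case: excluded_middle_informative. Qed.

Definition incl (T : Type) (X Y : T -> Prop) := forall x, X x -> Y x.
Definition same (T : Type) (X Y : T -> Prop) := forall x, X x <-> Y x.

Section ModuleLength.
Variables (S : comNzRingType) (M : zmodType) (act : S -> M -> M).
Hypothesis actD : forall a x y, act a (x + y) = act a x + act a y.
Hypothesis actDl : forall a b x, act (a + b) x = act a x + act b x.
Hypothesis actM : forall a b x, act (a * b) x = act a (act b x).
Hypothesis act1 : forall x, act 1 x = x.

Lemma act0l x : act 0 x = 0.
Proof. by apply: (@addrI _ (act 0 x)); rewrite -actDl !addr0. Qed.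

Lemma act0r a : act a 0 = 0.
Proof. by apply: (@addrI _ (act a 0)); rewrite -actD !addr0. Qed.

Lemma actNl a x : act (- a) x = - act a x.
Proof. by apply/eqP; rewrite -subr_eq0 opprK -actDl addNr act0l. Qed.

Lemma act_sum a r (F : nat -> M) : act a (\sum_(j < r) F j) = \sum_(j < r) act a (F j).
Proof.
elim: r => [|r IH]; first by rewrite !big_ord0 act0r.
by rewrite !big_ord_recr /= actD IH.
Qed.

Lemma submodI X Y : is_submod act X -> is_submod act Y ->
  is_submod act (fun x => X x /\ Y x).
Proof.
move=> [X0 [XD [XN XA]]] [Y0 [YD [YN YA]]].
split; first by [].
split; first by move=> x y [? ?] [? ?]; split; auto.
by split=> [x|a x] [? ?]; split; auto.
Qed.

Lemma submodD X Y : is_submod act X -> is_submod act Y ->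
  is_submod act (fun x => exists y b, X y /\ Y b /\ x = y + b).
Proof.
move=> [X0 [XD [XN XA]]] [Y0 [YD [YN YA]]]; split; first by exists 0, 0; rewrite addr0.
split; first by move=> x y [y1 [b1 [? [? ->]]]] [y2 [b2 [? [? ->]]]];
  exists (y1 + y2), (b1 + b2); split; [auto|split; [auto|]]; rewrite addrACA.
split; first by move=> x [y1 [b1 [? [? ->]]]]; exists (- y1), (- b1); rewrite opprD; auto.
by move=> a x [y1 [b1 [? [? ->]]]]; exists (act a y1), (act a b1); rewrite actD; auto.
Qed.

Fixpoint strict_steps (c : nat -> M -> Prop) (m : nat) : nat :=
  match m with
  | 0 => 0%N
  | m'.+1 => (strict_steps c m' + indicator (exists x, c m'.+1 x /\ ~ c m' x))%N
  end.

Definition chain_in (A B : M -> Prop) (c : nat -> M -> Prop) m :=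
  (forall i, (i <= m)%N -> is_submod act (c i) /\ incl A (c i) /\ incl (c i) B) /\
  (forall i, (i < m)%N -> incl (c i) (c i.+1)).

(* The length of B/A is at most p: every chain between A and B has at most
   p strict steps.  Unlike [mlength], this notion composes along A <= B <= C. *)
Definition chains_bounded (A B : M -> Prop) p :=
  forall c m, chain_in A B c m -> (strict_steps c m <= p)%N.

Lemma strict_steps_le_add c c1 c2 m :
  (forall i, (i < m)%N -> (exists x, c i.+1 x /\ ~ c i x) ->
     (exists x, c1 i.+1 x /\ ~ c1 i x) \/ (exists x, c2 i.+1 x /\ ~ c2 i x)) ->
  (strict_steps c m <= strict_steps c1 m + strict_steps c2 m)%N.
Proof.
elim: m => [|m IH] H //=.
rewrite addnACA leq_add //; first by apply: IH => i lt; apply/H/ltnW.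
case: (classic (exists x, c m.+1 x /\ ~ c m x)) => [st|nst]; last by rewrite indicatorF.
rewrite indicatorT //; case: (H m (ltnSn m) st) => [h|h]; first by rewrite indicatorT.
by rewrite (indicatorT h) addn1.
Qed.

Definition chain_meet (c : nat -> M -> Prop) (B : M -> Prop) i x := c i x /\ B x.
Definition chain_join (c : nat -> M -> Prop) (B : M -> Prop) i x :=
  exists y b, c i y /\ B b /\ x = y + b.

(* A strict step of c stays strict in c /\ B or in c + B (modular law). *)
Lemma split_chain A B C c m :
  is_submod act B -> incl A B -> incl B C -> is_submod act C -> chain_in A C c m ->
  [/\ chain_in A B (chain_meet c B) m, chain_in B C (chain_join c B) m &
      (strict_steps c m <= strict_steps (chain_meet c B) m
                            + strict_steps (chain_join c B) m)%N].
Proof.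
move=> sB AB BC sC [Hc Hm]; split.
- split=> [i le|i lt x [cx Bx]]; last by split => //; apply: (Hm i lt).
  have [si [Ai iC]] := Hc i le; split; first exact: submodI.
  by split => [x Ax|x []] //; split; auto.
- split=> [i le|i lt x [y [b [cy [Bb ->]]]]]; last by exists y, b; split => //; apply: (Hm i lt).
  have [si [Ai iC]] := Hc i le; split; first exact: submodD.
  split; first by move=> x Bx; exists 0, x; rewrite add0r; split => //; case: si.
  move=> x [y [b [cy [Bb ->]]]]; case: sC => _ [CD _]; apply: CD; auto.
- apply: strict_steps_le_add => i lt [x [cx ncx]].
  case: (classic (exists x, chain_meet c B i.+1 x /\ ~ chain_meet c B i x)) => [h|h];
    [by left|right].
  exists x; split; first by exists x, 0; rewrite addr0; split => //; split => //; case: sB.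
  move=> [y [b [cy [Bb E]]]]; apply: ncx.
  have [si _] := Hc i (ltnW lt); have [[_ [D1 [N1 _]]] _] := Hc i.+1 lt.
  have cb : c i.+1 b.
    by rewrite (_ : b = x - y); [apply/D1/N1/(Hm i lt)|rewrite E addrC addKr].
  have [] : chain_meet c B i b by apply: NNPP => nb; apply: h; exists b.
  by move=> cib _; rewrite E; case: si => _ [D _]; apply: D.
Qed.

Lemma split_chain_ends A B C c m :
  is_submod act A -> is_submod act B -> is_submod act C -> incl A B -> incl B C ->
  same (c 0%N) A -> same (c m) C ->
  [/\ same (chain_meet c B 0) A, same (chain_meet c B m) B,
      same (chain_join c B 0) B & same (chain_join c B m) C].
Proof.
move=> [A0 _] [B0 [BD _]] [_ [CD _]] AB BC c0 cm; split => x.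
- by rewrite /chain_meet c0; split => [[]|Ax] //; split => //; apply: AB.
- by rewrite /chain_meet cm; split => [[]|Bx] //; split => //; apply: BC.
- split=> [[y [b [/c0 Ay [Bb ->]]]]|Bx]; first by apply: BD => //; apply: AB.
  by exists 0, x; rewrite add0r; split => //; apply/c0.
- split=> [[y [b [/cm Cy [Bb ->]]]]|Cx]; first by apply: CD => //; apply: BC.
  by exists x, 0; rewrite addr0; split => //; apply/cm.
Qed.

Lemma chains_bounded_trans A B C p q :
  is_submod act B -> incl A B -> incl B C -> is_submod act C ->
  chains_bounded A B p -> chains_bounded B C q -> chains_bounded A C (p + q).
Proof.
move=> sB AB BC sC HAB HBC c m gc.
have [g1 g2 le] := split_chain sB AB BC sC gc.
by apply: (leq_trans le); apply: leq_add; [apply: HAB|apply: HBC].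
Qed.

Lemma chains_bounded_ext A B A' B' p :
  same A A' -> same B B' -> chains_bounded A B p -> chains_bounded A' B' p.
Proof.
move=> EA EB H c m [Hc Hm]; apply: H; split => // i le.
have [s [a b]] := Hc i le; split => //; split => x; [move/EA; exact: a|by move/b/EB].
Qed.

Lemma chains_bounded0 A B : incl B A -> chains_bounded A B 0.
Proof.
move=> BA c m [Hc Hm]; elim: m Hc Hm => [|m IH] Hc Hm //=.
rewrite indicatorF ?addn0.
  by apply: IH => [i le|i lt]; [apply/Hc/leqW|apply/Hm/ltnW].
move=> [x [cx ncx]]; apply: ncx; have [_ [A1 B1]] := Hc m.+1 (leqnn _).
by have [_ [A0 _]] := Hc m (leqnSn _); apply/A0/BA/B1.
Qed.

Section LocalAction.
Variable n : S -> Prop.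
Hypothesis units_outside : forall s, ~ n s -> exists t, t * s = 1.

Lemma cyclic_no_intermediate B g X :
  is_submod act B -> (forall s, n s -> B (act s g)) -> is_submod act X ->
  incl B X -> incl X (fun x => exists b a, B b /\ x = b + act a g) ->
  incl X B \/ incl (fun x => exists b a, B b /\ x = b + act a g) X.
Proof.
move=> [_ [BD _]] Bg [_ [XD [XN XA]]] BX XBg.
case: (classic (incl X B)) => [h|h]; [by left|right].
have [x [Xx nBx]] : exists x, X x /\ ~ B x.
  by apply: NNPP => N; apply: h => x Xx; apply: NNPP => nb; apply: N; exists x.
have [b [a [Bb E]]] := XBg x Xx.
have na : ~ n a by move=> na; apply: nBx; rewrite E; apply: BD => //; apply: Bg.
have [t ta] := units_outside na.
have Xg : X g.
  have <- : act t (x - b) = g by rewrite E addrC addKr -actM ta act1.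
  by apply/XA/XD => //; apply/XN/BX.
by move=> y [b' [a' [Bb' ->]]]; apply: XD; [apply: BX|apply: XA].
Qed.

Lemma chains_bounded_cyclic B g : is_submod act B -> (forall s, n s -> B (act s g)) ->
  chains_bounded B (fun x => exists b a, B b /\ x = b + act a g) 1.
Proof.
move=> sB Bg c m [Hc Hm].
suff : strict_steps c m = 0%N \/ (strict_steps c m = 1%N /\
         incl (fun x => exists b a, B b /\ x = b + act a g) (c m)).
  by case=> [->|[-> _]].
elim: m Hc Hm => [|m IH] Hc Hm; first by left.
have {IH} := IH (fun i le => Hc i (leqW le)) (fun i lt => Hm i (ltnW lt)).
have [s1 [B1 B1']] := Hc m.+1 (leqnn _).
case: (classic (exists x, c m.+1 x /\ ~ c m x)) => [st|nst]; last first.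
  rewrite /= indicatorF // addn0 => -[->|[-> H]]; [by left|right; split => //].
  by move=> x /H; apply: Hm.
rewrite /= indicatorT //; case => [->|[_ H]]; last first.
  by exfalso; case: st => x [c1 nc]; apply/nc/H/B1'.
right; split => //; case: (cyclic_no_intermediate sB Bg s1 B1 B1') => // h.
case: st => x [c1 nc]; exfalso; apply: nc.
by have [_ [A0 _]] := Hc m (leqnSn _); apply/A0/h.
Qed.

Definition span (B : M -> Prop) (g : nat -> M) r x :=
  exists b (a : nat -> S), B b /\ x = b + \sum_(j < r) act (a j) (g j).

Lemma span_submod B g r : is_submod act B -> is_submod act (span B g r).
Proof.
move=> [B0 [BD [BN BA]]]; split.
  by exists 0, (fun _ => 0); split => //; rewrite add0r big1 // => j _; rewrite act0l.
split.
  move=> x y [b [a [Bb ->]]] [b' [a' [Bb' ->]]]; exists (b + b'), (fun j => a j + a' j).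
  split; first by auto.
  by rewrite addrACA -big_split /=; congr (_ + _); apply: eq_bigr => j _; rewrite actDl.
split.
  move=> x [b [a [Bb ->]]]; exists (- b), (fun j => - a j); split; first by auto.
  by rewrite opprD -sumrN; congr (_ + _); apply: eq_bigr => j _; rewrite actNl.
move=> s x [b [a [Bb ->]]]; exists (act s b), (fun j => s * a j); split; first by auto.
rewrite actD (act_sum _ _ (fun j => act (a j) (g j))); congr (_ + _).
by apply: eq_bigr => j _; rewrite actM.
Qed.

Lemma span_sub B g r : is_submod act B -> incl B (span B g r).
Proof.
move=> sB x Bx; exists x, (fun _ => 0); split => //.
by rewrite big1 ?addr0 // => j _; rewrite act0l.
Qed.

Lemma spanS B g r :
  same (fun x => exists b a, span B g r b /\ x = b + act a (g r)) (span B g r.+1).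
Proof.
move=> x; split.
  move=> [b [a [[b0 [a0 [Bb0 ->]]] ->]]].
  exists b0, (fun j => if j == r then a else a0 j); split => //.
  rewrite big_ord_recr /= eqxx -addrA; congr (_ + (_ + _)); apply: eq_bigr => j _.
  by rewrite ifN // neq_ltn ltn_ord.
move=> [b [a [Bb ->]]]; exists (b + \sum_(j < r) act (a j) (g j)), (a r).
by split; [exists b, a|rewrite big_ord_recr /= addrA].
Qed.

Lemma chains_bounded_span B g r : is_submod act B -> (forall j s, n s -> B (act s (g j))) ->
  chains_bounded B (span B g r) r.
Proof.
move=> sB Bg; elim: r => [|r IH].
  by apply: chains_bounded0 => x [b [a [Bb ->]]]; rewrite big_ord0 addr0.
suff : chains_bounded B (span B g r.+1) (r + 1) by rewrite addn1.
apply: (chains_bounded_trans (span_submod g r sB) (span_sub g r sB)) => //.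
- move=> x Hx; apply: (proj1 (spanS B g r x)).
  by exists x, 0; rewrite act0l addr0; split.
- exact: span_submod.
- have Bgr s : n s -> span B g r (act s (g r)) by move=> ns; apply/span_sub/Bg.
  apply: chains_bounded_ext (chains_bounded_cyclic (span_submod g r sB) Bgr).
  + by move=> x; split.
  + exact: spanS.
Qed.

End LocalAction.

Lemma subchain_ext K J K' J' d m : same K K' -> same J J' ->
  subchain act K J d m -> subchain act K' J' d m.
Proof.
move=> EK EJ [H0 [Hm H]]; split; first by move=> x; rewrite H0.
by split => // x; rewrite Hm.
Qed.

Lemma subchain_mono K J c m : subchain act K J c m ->
  forall i j, (i <= j <= m)%N -> incl (c i) (c j).
Proof.
move=> [_ [_ [_ H]]] i j /andP [ij jm]; elim: j ij jm => [|j IH] ij jm.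
  by move: ij; rewrite leqn0 => /eqP ->.
move: ij; rewrite leq_eqVlt => /orP [/eqP -> //|ij] x cx.
by apply: (proj1 (H j jm)); apply: IH => //; apply: ltnW.
Qed.

Lemma subchain_chain_in K J c m : subchain act K J c m ->
  chain_in K J c m /\ strict_steps c m = m.
Proof.
move=> sc; have mono := subchain_mono sc; case: sc => [H0 [Hm [Hs Hst]]]; split.
  split => [i le|i lt]; last exact: (proj1 (Hst i lt)).
  split; first exact: Hs.
  split => x cx; first by apply: (mono 0%N) => //; apply/H0.
  by apply/Hm; apply: (mono i) => //; rewrite le leqnn.
elim: m {H0 Hm Hs mono} Hst => [|m IH] Hst //=.
rewrite IH ?indicatorT ?addn1 // => [|i lt]; first exact: (proj2 (Hst m (ltnSn m))).
by apply/Hst/ltnW.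
Qed.

Lemma mlength_spec K J p : is_submod act K -> is_submod act J -> incl K J ->
  chains_bounded K J p ->
  [/\ exists c, subchain act K J c (mlength act J K),
      forall c m, subchain act K J c m -> (m <= mlength act J K)%N &
      (mlength act J K <= p)%N].
Proof.
move=> sK sJ KJ Hb.
have le_p c m : subchain act K J c m -> (m <= p)%N.
  by move=> sc; have [g <-] := subchain_chain_in sc; apply: Hb.
have [m0 [c0 sc0]] : exists m0 c, subchain act K J c m0.
  case: (classic (incl J K)) => [JK|nJK].
    exists 0%N, (fun _ => K); split=> //; split; first by move=> x; split; [apply: KJ|apply: JK].
    by split => // i; rewrite leqn0 => /eqP ->.
  exists 1%N, (fun i => if i == 0%N then K else J); split => //; split => //.
  split; first by case => [|[|i]].
  case=> // _; split => //.
  by apply: NNPP => N; apply: nJK => x Jx; apply: NNPP => nK; apply: N; exists x.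
have [[c sc] H] := natmax_spec (natmax_exists (ex_intro _ c0 sc0) (fun k '(ex_intro c sc) => le_p c k sc)).
by split; [exists c|move=> c' m sc'; apply: H; exists c'|exact: le_p sc].
Qed.

Lemma compress_chain c m : (forall i, (i <= m)%N -> is_submod act (c i)) ->
  (forall i, (i < m)%N -> incl (c i) (c i.+1)) ->
  exists d, subchain act (c 0%N) (c m) d (strict_steps c m).
Proof.
elim: m => [|m IH] Hs Hm.
  exists c; split; [by move=> x; split|split; [by move=> x; split|split; [|by move=> i]]].
  by move=> i; rewrite leqn0 => /eqP ->; apply: Hs.
have [d sd] := IH (fun i le => Hs i (leqW le)) (fun i lt => Hm i (ltnW lt)).
case: (classic (exists x, c m.+1 x /\ ~ c m x)) => [st|nst]; last first.
  exists d; rewrite /= indicatorF // addn0; apply: subchain_ext sd => // x.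
  split=> [|cx]; first exact: Hm.
  by apply: NNPP => ncx; apply: nst; exists x.
rewrite /= indicatorT // addn1; set s := strict_steps c m in sd *.
have [H0 [Hm' [Hs' Hst]]] := sd.
exists (fun i => if (i <= s)%N then d i else c m.+1); split => //.
split; first by rewrite ltnn.
split; first by move=> i _; case: ifP => h; [apply: Hs'|apply: Hs (leqnn _)].
move=> i; rewrite ltnS => le; have [->|ne] := eqVneq i s.
  rewrite leqnn ltnn; split; first by move=> x /Hm'; apply: Hm.
  by case: st => x [c1 nc]; exists x; split => // /Hm'.
have lt : (i < s)%N by rewrite ltn_neqAle ne le.
by rewrite le lt; apply: Hst.
Qed.

Lemma subchain_cat K J L c d p q : subchain act K J c p -> subchain act J L d q ->
  subchain act K L (fun i => if (i <= p)%N then c i else d (i - p)%N) (p + q).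
Proof.
move=> [c0 [cp [cs cst]]] [d0 [dq [ds dst]]]; split => //.
split.
  move=> x; case: ifP => [le|].
    have q0 : q = 0%N by move: le; rewrite -{2}(addn0 p) leq_add2l leqn0 => /eqP.
    by subst q; rewrite addn0 cp -d0; apply: dq.
  by rewrite addKn dq.
split; first by move=> i le; case: ifP => [ip|pi]; [apply: cs|apply: ds; rewrite leq_subLR].
move=> i lt; case: (ltngtP i p) => [ip|pi|ep].
- exact: cst.
- by rewrite subSn ?(ltnW pi) //; apply: dst; rewrite ltn_subLR // ltnW.
subst i; rewrite subSn // subnn; have q0 : (0 < q)%N by lia.
have [h1 [x [h2 h3]]] := dst 0%N q0.
split; first by move=> y cy; apply: h1; apply/d0; apply/cp.
by exists x; split => // cx; apply: h3; apply/d0; apply/cp.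
Qed.

Lemma strict_steps_le_mlength K J p c m : is_submod act K -> is_submod act J -> incl K J ->
  chains_bounded K J p -> chain_in K J c m -> same (c 0%N) K -> same (c m) J ->
  (strict_steps c m <= mlength act J K)%N.
Proof.
move=> sK sJ KJ Hb [Hc Hm] E0 Em.
have [d sd] := compress_chain (fun i le => proj1 (Hc i le)) Hm.
have [_ H _] := mlength_spec sK sJ KJ Hb.
by apply: (H d); apply: subchain_ext sd.
Qed.

Lemma mlength_add K J L p q :
  is_submod act K -> is_submod act J -> is_submod act L -> incl K J -> incl J L ->
  chains_bounded K J p -> chains_bounded J L q ->
  mlength act L K = (mlength act J K + mlength act L J)%N.
Proof.
move=> sK sJ sL KJ JL HKJ HJL.
have KL : incl K L by move=> x /KJ /JL.
have HKL := chains_bounded_trans sJ KJ JL sL HKJ HJL.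
have [[c1 s1] _ _] := mlength_spec sK sJ KJ HKJ.
have [[c2 s2] _ _] := mlength_spec sJ sL JL HJL.
have [[c sc] Hmax _] := mlength_spec sK sL KL HKL.
apply/eqP; rewrite eqn_leq (Hmax _ _ (subchain_cat s1 s2)) andbT.
have [gc <-] := subchain_chain_in sc; have [c0 [cm _]] := sc.
have [g1 g2 le] := split_chain sJ KJ JL sL gc.
have [E1 E2 E3 E4] := split_chain_ends sK sJ sL KJ JL c0 cm.
apply: (leq_trans le); apply: leq_add.
- exact: (strict_steps_le_mlength sK sJ KJ HKJ g1 E1 E2).
- exact: (strict_steps_le_mlength sJ sL JL HJL g2 E3 E4).
Qed.


Lemma mlength_ge1 K J p x : is_submod act K -> is_submod act J -> incl K J ->
  chains_bounded K J p -> J x -> ~ K x -> (1 <= mlength act J K)%N.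
Proof.
move=> sK sJ KJ Hb Jx nKx; have [_ H _] := mlength_spec sK sJ KJ Hb.
apply: (H (fun i => if i == 0%N then K else J)); split => //; split => //.
by split; [case=> [|[|i]]|case=> // _; split => //; exists x].
Qed.

Lemma mlength_ge2 K X J p x y : is_submod act K -> is_submod act X -> is_submod act J ->
  incl K X -> incl X J -> chains_bounded K J p ->
  X x -> ~ K x -> J y -> ~ X y -> (2 <= mlength act J K)%N.
Proof.
move=> sK sX sJ KX XJ Hb Xx nKx Jy nXy.
have [_ H _] := mlength_spec sK sJ (fun z Kz => XJ z (KX z Kz)) Hb.
apply: (H (fun i => if i == 0%N then K else if i == 1%N then X else J)).
split => //; split => //; split; first by case=> [|[|[|i]]].
by case=> [|[|//]] _; (split; [by []|]); [exists x|exists y].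
Qed.

Lemma mlength0 K J : is_submod act K -> is_submod act J -> incl K J -> incl J K ->
  mlength act J K = 0%N.
Proof.
move=> sK sJ KJ JK; have [_ _] := mlength_spec sK sJ KJ (chains_bounded0 JK).
by rewrite leqn0 => /eqP.
Qed.

End ModuleLength.

Lemma mlength_ext (A : comNzRingType) (M : zmodType) (act : A -> M -> M) J K J' K' :
  same J J' -> same K K' -> mlength act J K = mlength act J' K'.
Proof.
move=> EJ EK; apply: natmax_ext => l; split => -[c sc]; exists c.
  exact: subchain_ext sc.
by apply: subchain_ext sc => x; [rewrite EK|rewrite EJ].
Qed.

Lemma mlength_act (A B : comNzRingType) (M : zmodType) (actA : A -> M -> M)
    (actB : B -> M -> M) J K :
  (forall X, is_submod actA X <-> is_submod actB X) -> mlength actA J K = mlength actB J K.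
Proof.
move=> E; apply: natmax_ext => l; split => -[c [h1 [h2 [h3 h4]]]]; exists c;
  (split; [by []|split; [by []|split; [|by []]]]) => i le; apply/E; exact: h3.
Qed.

Section IdealPowers.
Variable A : comNzRingType.

Lemma ideal_sum (K : A -> Prop) (T : Type) (r : seq T) (F : T -> A) :
  is_ideal K -> (forall i, K (F i)) -> K (\sum_(i <- r) F i).
Proof. by move=> [K0 [KD _]] KF; apply: big_ind. Qed.

Lemma ideal_opp (K : A -> Prop) x : is_ideal K -> K x -> K (- x).
Proof. by move=> [_ [_ KM]] Kx; rewrite -mulN1r; apply: KM. Qed.

Lemma ideal_submod (B : comNzRingType) (f : B -> A) (K : A -> Prop) :
  is_ideal K -> is_submod (fun b x => f b * x) K.
Proof.
move=> iK; have [K0 [KD KM]] := iK; split => //; split => //.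
by split=> [x|b x]; [apply: ideal_opp|apply: KM].
Qed.

Definition principal (x y : A) := exists a, y = a * x.
Definition principal_plus (x : A) (K : A -> Prop) y := exists r z, K z /\ y = r * x + z.

Lemma principal_ideal (x0 : A) : is_ideal (principal x0).
Proof.
split; first by exists 0; rewrite mul0r.
split; first by move=> x y [a ->] [b ->]; exists (a + b); rewrite mulrDl.
by move=> c x [a ->]; exists (c * a); rewrite mulrA.
Qed.

Lemma idealpow_ideal (J : A -> Prop) i : is_ideal (idealpow J i).
Proof.
split.
  by exists 0%N, (fun _ => 0), (fun _ _ => 0); split; [move=> [] | rewrite big_ord0].
split.
  move=> x y [m1 [a1 [y1 [H1 ->]]]] [m2 [a2 [y2 [H2 ->]]]].
  exists (m1 + m2)%N, (fun j => match split j with inl j1 => a1 j1 | inr j2 => a2 j2 end),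
    (fun j => match split j with inl j1 => y1 j1 | inr j2 => y2 j2 end).
  split; first by move=> j l; case: (split j).
  rewrite big_split_ord /=; congr (_ + _); apply: eq_bigr => j _.
    by have -> : split (lshift m2 j) = inl j := unsplitK (inl _).
  by have -> : split (rshift m1 j) = inr j := unsplitK (inr _).
move=> c x [m [a [y [H ->]]]]; exists m, (fun j => c * a j), y; split => //.
by rewrite mulr_sumr; apply: eq_bigr => j _; rewrite mulrA.
Qed.

Lemma idealpow0 (J : A -> Prop) x : idealpow J 0 x.
Proof.
exists 1%N, (fun _ => x), (fun _ _ => 0); split; first by move=> j [].
by rewrite big_ord1 big_ord0 mulr1.
Qed.

Lemma idealpowS_sub (J : A -> Prop) i : incl (idealpow J i.+1) (idealpow J i).
Proof.
move=> x [m [a [y [H ->]]]].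
exists m, (fun j => a j * y j ord_max), (fun j l => y j (widen_ord (leqnSn i) l)).
split => //; apply: eq_bigr => j _; rewrite big_ord_recr /= mulrAC -mulrA; congr (_ * _).
Qed.

Lemma idealpow_antimono (J : A -> Prop) i j : (i <= j)%N -> incl (idealpow J j) (idealpow J i).
Proof.
elim: j => [|j IH]; first by rewrite leqn0 => /eqP ->.
rewrite leq_eqVlt => /orP [/eqP -> //|lt] x /idealpowS_sub.
exact: IH.
Qed.

Lemma idealpow_mul (J : A -> Prop) i u w : J u -> idealpow J i w -> idealpow J i.+1 (u * w).
Proof.
move=> Ju [m [a [y [H ->]]]].
exists m, a, (fun j l => match unlift ord0 l with Some l' => y j l' | None => u end).
split; first by move=> j l; case: (unlift ord0 l).
rewrite mulr_sumr; apply: eq_bigr => j _; rewrite big_ord_recl unlift_none.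
by rewrite mulrCA; congr (_ * (_ * _)); apply: eq_bigr => l _; rewrite liftK.
Qed.

Lemma idealpowS_ind (J K : A -> Prop) i : is_ideal K ->
  (forall u w, J u -> idealpow J i w -> K (u * w)) -> incl (idealpow J i.+1) K.
Proof.
move=> iK H x [m [a [y [Hy ->]]]]; apply: ideal_sum => // j.
case: iK => _ [_ KM]; apply: KM; rewrite big_ord_recl; apply: H => //.
exists 1%N, (fun _ => 1), (fun _ l => y j (lift ord0 l)); split => //.
by rewrite big_ord1 mul1r.
Qed.

Lemma idealpow1 (J : A -> Prop) x : J x -> idealpow J 1 x.
Proof. by move=> Jx; rewrite -(mulr1 x); apply: idealpow_mul => //; apply: idealpow0. Qed.

Lemma idealpow_stable (J : A -> Prop) j k : incl (idealpow J j) (idealpow J j.+1) ->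
  (j <= k)%N -> incl (idealpow J j) (idealpow J k).
Proof.
move=> H; have step d : incl (idealpow J (j + d)) (idealpow J (j + d).+1).
  elim: d => [|d IHd]; first by rewrite addn0.
  rewrite addnS; apply: idealpowS_ind; first exact: idealpow_ideal.
  by move=> u w Ju /IHd; apply: idealpow_mul.
move/subnKC <-; elim: (k - j)%N => [|d IH]; first by rewrite addn0.
by rewrite addnS => x /IH /step.
Qed.

Lemma principal_plus_ideal x K : is_ideal K -> is_ideal (principal_plus x K).
Proof.
move=> [K0 [KD KM]]; split; first by exists 0, 0; rewrite mul0r addr0.
split.
  move=> y y' [r [z [Kz ->]]] [r' [z' [Kz' ->]]]; exists (r + r'), (z + z').
  by split; [apply: KD|rewrite mulrDl addrACA].
move=> a y [r [z [Kz ->]]]; exists (a * r), (a * z).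
by split; [apply: KM|rewrite mulrDr mulrA].
Qed.

Lemma idealpow_cover (J : A -> Prop) v x :
  incl (idealpow J v) (principal_plus x (idealpow J v.+1)) ->
  forall j, incl (idealpow J v) (principal_plus x (idealpow J (v + j))).
Proof.
move=> Hv; have step j : incl (idealpow J (v + j)) (principal_plus x (idealpow J (v + j).+1)).
  elim: j => [|j IH]; first by rewrite addn0.
  rewrite addnS; apply: idealpowS_ind; first exact/principal_plus_ideal/idealpow_ideal.
  move=> u w Ju /IH [r [z [hz ->]]]; exists (u * r), (u * z).
  by split; [apply: idealpow_mul|rewrite mulrDr mulrA].
elim=> [|j IH] y.
  by rewrite addn0 => Jy; exists 0, y; rewrite mul0r add0r.
move=> /IH [r [z [/step [r' [z' [hz' ->]]] ->]]].
by exists (r + r'), z'; rewrite addnS; split => //; rewrite addrA mulrDl.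
Qed.

Lemma mu_principal (K : A -> Prop) x : same K (principal x) -> x <> 0 -> mu K = 1%N.
Proof.
move=> Kx x0; apply: natmin_eq.
  exists (fun _ => x) => y; rewrite Kx; split => -[r ->].
    by exists (fun _ => r); rewrite big_ord1.
  by exists (r ord0); rewrite big_ord1.
case=> // [[g Hg]]; have /Hg [a] : K x by apply/Kx; exists 1; rewrite mul1r.
by rewrite big_ord0.
Qed.

Lemma mu1_principal (K : A -> Prop) : mu K = 1%N -> exists g, same K (principal g).
Proof.
move=> K1; pose P k := exists g : 'I_k -> A,
  forall x, K x <-> exists a : 'I_k -> A, x = \sum_(i < k) a i * g i.
have : P (natmin P) by apply: natmin_pos; rewrite -/(mu K) K1.
rewrite -/(mu K) K1 => -[g Hg]; exists (g ord0) => y.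
rewrite Hg; split=> -[a ->]; first by exists (a ord0); rewrite big_ord1.
by exists (fun _ => a); rewrite big_ord1.
Qed.

End IdealPowers.

Lemma idealpow_image (S T : comNzRingType) (pi : {rmorphism S -> T}) (n : S -> Prop) i y :
  (forall y : T, exists x, pi x = y) ->
  idealpow (fun y => exists x, n x /\ pi x = y) i y <-> exists x, idealpow n i x /\ pi x = y.
Proof.
move=> pi_surj; split.
  move=> [m [a [z [H ->]]]].
  pose f j l := proj1_sig (constructive_indefinite_description _ (H j l)).
  have fP j l : n (f j l) /\ pi (f j l) = z j l.
    by rewrite /f; case: constructive_indefinite_description.
  pose b j := proj1_sig (constructive_indefinite_description _ (pi_surj (a j))).
  have bP j : pi (b j) = a j by rewrite /b; case: constructive_indefinite_description.
  exists (\sum_(j < m) b j * \prod_(l < i) f j l); split.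
    by exists m, b, f; split => // j l; case: (fP j l).
  rewrite rmorph_sum; apply: eq_bigr => j _; rewrite rmorphM bP rmorph_prod.
  by congr (_ * _); apply: eq_bigr => l _; case: (fP j l).
move=> [x [[m [a [z [H ->]]]] <-]].
exists m, (fun j => pi (a j)), (fun j l => pi (z j l)); split; first by move=> j l; exists (z j l).
by rewrite rmorph_sum; apply: eq_bigr => j _; rewrite rmorphM rmorph_prod.
Qed.

Lemma pigeonhole_fiber e r K (f : 'I_e -> 'I_r) : (r * K < e)%N ->
  exists j, (K <= \sum_(l < e | f l == j) 1)%N.
Proof.
move=> lt; apply: NNPP => N.
have small (j : 'I_r) : (\sum_(l < e | f l == j) 1 <= K)%N.
  by rewrite leqNgt; apply/negP => h; apply: N; exists j; apply: ltnW.
suff : (e <= r * K)%N by rewrite leqNgt lt.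
have {1}-> : e = (\sum_(l < e) 1)%N by rewrite sum1_card card_ord.
apply: (@leq_trans (\sum_(j < r) K)); last by rewrite sum_nat_const card_ord.
by rewrite (partition_big f xpredT) //=; apply: leq_sum => j _; apply: small.
Qed.

(* If the ideal n is generated by g_0, ..., g_(r-1) and every element of n has
   a power in the ideal I, then some power of n lies in I: a product of
   r * K + 1 elements of n expands into monomials in the g_j, each with some
   g_j repeated at least K times. *)
Lemma fg_radical_power (A : comNzRingType) (n I : A -> Prop) r (g : 'I_r -> A) :
  is_ideal I ->
  (forall x, n x <-> exists a : 'I_r -> A, x = \sum_(i < r) a i * g i) ->
  (forall x, n x -> exists k, I (x ^+ k)) ->
  exists N, incl (idealpow n N) I.
Proof.
move=> iI Hn Hrad; have [_ [_ IM]] := iI.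
have gn j : n (g j).
  apply/Hn; exists (fun i => if i == j then 1 else 0).
  by rewrite (bigD1 j) //= eqxx mul1r big1 ?addr0 // => i /negbTE ->; rewrite mul0r.
pose k j := proj1_sig (constructive_indefinite_description _ (Hrad _ (gn j))).
have kP j : I (g j ^+ k j) by rewrite /k; case: constructive_indefinite_description.
pose K := (\sum_(j < r) k j)%N.
have kK j : (k j <= K)%N by rewrite /K (bigD1 j) //= leq_addr.
exists (r * K).+1 => x [m [a [y [Hy ->]]]].
apply: ideal_sum => // j; apply: (IM).
pose b l := proj1_sig (constructive_indefinite_description _ (proj1 (Hn _) (Hy j l))).
have bP l : y j l = \sum_(i < r) b l i * g i.
  by rewrite /b; case: constructive_indefinite_description.
rewrite (eq_bigr _ (fun l _ => bP l)) bigA_distr_bigA /=.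
apply: ideal_sum => // f; rewrite big_split /=; apply: (IM).
have [j0 cnt] := pigeonhole_fiber f (ltnSn (r * K)).
rewrite (bigID (fun l => f l == j0)) /= mulrC; apply: (IM).
have -> : \prod_(l < (r * K).+1 | f l == j0) g (f l)
          = g j0 ^+ (\sum_(l < (r * K).+1 | f l == j0) 1)%N.
  rewrite (big_morph (fun k => g j0 ^+ k) (fun a b => exprD (g j0) a b) (expr0 _)).
  by apply: eq_bigr => l /eqP ->; rewrite expr1.
by rewrite -(subnK (leq_trans (kK j0) cnt)) exprD; apply: (IM).
Qed.

Section PrincipalPowers.
Variables (A : comNzRingType) (J : A -> Prop).
Hypothesis J_ideal : is_ideal J.
Hypothesis J_proper : ~ J 1.
Hypothesis units_outside : forall y, ~ J y -> exists t, t * y = 1.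

Lemma cyclic_nakayama t g : J t -> g = t * g -> g = 0.
Proof.
move=> Jt gE; have [_ [JD _]] := J_ideal.
have n1t : ~ J (1 - t).
  by move=> h; apply: J_proper; rewrite -(subrK t 1); apply: JD.
have [u hu] := units_outside n1t.
by rewrite -[g]mul1r -hu -mulrA mulrBl mul1r -gE subrr mulr0.
Qed.

(* A principal power J^(v+1) = (g) is generated by a product y * w with y in J
   and w in J^v: some monomial of g generates it, unless g = 0. *)
Lemma principal_power_factor v g : same (idealpow J v.+1) (principal g) ->
  exists y w, J y /\ idealpow J v w /\ same (idealpow J v.+1) (principal (y * w)).
Proof.
move=> Hg; have [J0 [JD JM]] := J_ideal.
have [m [a [y [Hy eg]]]] : idealpow J v.+1 g by apply/Hg; exists 1; rewrite mul1r.
have monomial k : principal g (\prod_(l < v.+1) y k l).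
  apply/Hg; exists 1%N, (fun _ => 1), (fun _ => y k); split => //.
  by rewrite big_ord1 mul1r.
pose r k := proj1_sig (constructive_indefinite_description _ (monomial k)).
have rP k : \prod_(l < v.+1) y k l = r k * g.
  by rewrite /r; case: constructive_indefinite_description.
case: (classic (forall k, J (a k * r k))) => [allJ|nall].
  have g0 : g = 0.
    apply: (@cyclic_nakayama (\sum_(k < m) a k * r k)); first exact: ideal_sum.
    by rewrite {1}eg mulr_suml; apply: eq_bigr => k _; rewrite rP mulrA.
  exists 0, 0; split => //; split; first by case: (idealpow_ideal J v).
  by move=> z; rewrite Hg g0 mulr0.
have [k nk] : exists k, ~ J (a k * r k).
  by apply: NNPP => N; apply: nall => k; apply: NNPP => h; apply: N; exists k.
have [u hu] : exists u, u * r k = 1 by apply: units_outside => /(JM (a k)).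
exists (y k ord0), (\prod_(l < v) y k (lift ord0 l)); split => //; split.
  exists 1%N, (fun _ => 1), (fun _ l => y k (lift ord0 l)); split => //.
  by rewrite big_ord1 mul1r.
rewrite -big_ord_recl rP => z; rewrite Hg; split=> -[b ->].
  by exists (b * u); rewrite mulrA -(mulrA b) hu mulr1.
by exists (b * r k); rewrite mulrA.
Qed.

Lemma principal_power_step k y w : J y -> idealpow J k w ->
  same (idealpow J k.+1) (principal (y * w)) ->
  same (idealpow J k.+2) (principal (y * (y * w))).
Proof.
move=> Jy Jw Hk z; split.
  apply: idealpowS_ind z; first exact: principal_ideal.
  move=> u z' Ju /Hk [b ->].
  have /Hk [c uwE] : idealpow J k.+1 (u * w) by apply: idealpow_mul.
  exists (b * c); transitivity (b * y * (u * w)); first ring.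
  by rewrite uwE; ring.
move=> [b ->]; have [_ [_ M]] := idealpow_ideal J k.+2; apply: M.
by apply: idealpow_mul => //; apply/Hk; exists 1; rewrite mul1r.
Qed.

Lemma principal_powers v g : (0 < v)%N -> same (idealpow J v) (principal g) ->
  forall i, (v <= i)%N -> exists x, same (idealpow J i) (principal x).
Proof.
case: v => // v _ /principal_power_factor [y [w0 [Jy [Jw0 H0]]]] i /subnKC <-.
suff : forall d, exists w, idealpow J (v + d) w /\
                          same (idealpow J (v + d).+1) (principal (y * w)).
  by move=> /(_ (i - v.+1)%N) [w [_ Hw]]; exists (y * w); rewrite addSn.
elim=> [|d [w [Jw Hw]]]; first by exists w0; rewrite addn0.
exists (y * w); rewrite addnS; split; first exact: idealpow_mul.
exact: principal_power_step.
Qed.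

End PrincipalPowers.

Section Quotient.
Variables (S R : comNzRingType) (n I : S -> Prop) (pi : {rmorphism S -> R}).
Hypothesis S_noetherian : noetherian S.
Hypothesis n_local : is_local n.
Hypothesis I_primary : primary_to I n.
Hypothesis pi_surj : forall y : R, exists x, pi x = y.
Hypothesis pi_ker : forall x, pi x = 0 <-> I x.

Definition img (X : S -> Prop) (y : R) := exists x, X x /\ pi x = y.
Definition mR := img n.

Definition actR (a : S) (y : R) := pi a * y.
Definition actS (a x : S) := a * x.

Definition mpow i := idealpow mR i.
Definition npow i := idealpow n i.

Definition hR i := mlength actR (mpow i) (mpow i.+1).

Lemma actR_D a x y : actR a (x + y) = actR a x + actR a y. Proof. by rewrite /actR mulrDr. Qed.
Lemma actR_Dl a b x : actR (a + b) x = actR a x + actR b x.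
Proof. by rewrite /actR rmorphD mulrDl. Qed.
Lemma actR_M a b x : actR (a * b) x = actR a (actR b x). Proof. by rewrite /actR rmorphM mulrA. Qed.
Lemma actR_1 x : actR 1 x = x. Proof. by rewrite /actR rmorph1 mul1r. Qed.

Lemma n_ideal : is_ideal n. Proof. by case: n_local. Qed.

Lemma n_units s : ~ n s -> exists t, t * s = 1.
Proof.
move=> ns; case: n_local => _ [_ H].
case: (classic (principal s 1)) => [[t ->]|nJ1]; first by exists t.
by exfalso; apply/ns/(H _ (principal_ideal s) nJ1); exists 1; rewrite mul1r.
Qed.

Lemma I_sub_n : incl I n.
Proof. by case: I_primary => iI [nI1 _]; case: n_local => _ [_ H]; exact: H I iI nI1. Qed.

Lemma mR_ideal : is_ideal mR.
Proof.
have [n0 [nD nM]] := n_ideal; split; first by exists 0; rewrite rmorph0.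
split; first by move=> x y [a [na <-]] [b [nb <-]]; exists (a + b); rewrite rmorphD; auto.
move=> c y [a [na <-]]; have [b <-] := pi_surj c; exists (b * a); rewrite rmorphM; auto.
Qed.

Lemma mR_units y : ~ mR y -> exists t, t * y = 1.
Proof.
move=> ny; have [x ex] := pi_surj y; subst y.
have [t tx] : exists t, t * x = 1 by apply: n_units => nx; apply: ny; exists x.
by exists (pi t); rewrite -rmorphM tx rmorph1.
Qed.

Lemma mR_proper : ~ mR 1.
Proof.
move=> [x [nx px]]; case: n_local => [[_ [nD _]] [n1 _]]; apply: n1.
have /I_sub_n h : I (1 - x) by apply/pi_ker; rewrite rmorphB rmorph1 px subrr.
by rewrite -(subrK x 1); apply: nD.
Qed.

Lemma mpow_img i y : mpow i y <-> img (npow i) y.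
Proof. exact: idealpow_image. Qed.

Lemma mpow_submod i : is_submod actR (mpow i).
Proof. exact/ideal_submod/idealpow_ideal. Qed.

Lemma npow_submod i : is_submod actS (npow i).
Proof. exact: (ideal_submod id (idealpow_ideal n i)). Qed.

Lemma submodR_ring X : is_submod (fun a x : R => a * x) X <-> is_submod actR X.
Proof.
split=> -[X0 [XD [XN XM]]]; split => //; split => //; split => // a x Xx.
  exact: XM.
by have [b <-] := pi_surj a; apply: (XM b).
Qed.

(* Some power of n lies in I: n is finitely generated and I is n-primary. *)
Lemma npow_sub_I : exists N, incl (npow N) I.
Proof.
have [r [g Hg]] := S_noetherian n_ideal.
by case: I_primary => iI [_ [_ Hrad]]; apply: (fg_radical_power iI Hg) => x /Hrad.
Qed.

(* m^i/m^(i+1) has finite length: it is spanned by the images of finitely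
   many generators of n^i, each spanning a piece of length at most one. *)
Lemma hR_bounded i : exists p, chains_bounded actR (mpow i.+1) (mpow i) p.
Proof.
have [r [g Hg]] := S_noetherian (idealpow_ideal n i).
pose gn j := if insub j is Some k then g k else 0.
have gnE (k : 'I_r) : gn k = g k by rewrite /gn valK.
have gn_npow j : npow i (gn j).
  rewrite /gn; case: insub => [k|]; last by case: (idealpow_ideal n i).
  apply/Hg; exists (fun l => if l == k then 1 else 0).
  by rewrite (bigD1 k) //= eqxx mul1r big1 ?addr0 // => l /negbTE ->; rewrite mul0r.
exists r; apply: (chains_bounded_ext (A := mpow i.+1) (B := span actR (mpow i.+1) (pi \o gn) r)).
- by move=> x; split.
- move=> y; split.
    move=> [b [a [Bb ->]]]; have [_ [D M]] := idealpow_ideal mR i.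
    apply: D; first exact: idealpowS_sub.
    by apply: ideal_sum => [|j]; [apply: idealpow_ideal|apply/M/mpow_img; exists (gn j)].
  move=> /mpow_img [x [/Hg [a ->] <-]].
  exists 0, (fun j => if insub j is Some k then a k else 0).
  split; first by case: (idealpow_ideal mR i.+1).
  rewrite add0r rmorph_sum; apply: eq_bigr => j _.
  by rewrite /actR /= gnE valK rmorphM.
apply: (chains_bounded_span actR_D actR_Dl actR_M actR_1 n_units (mpow_submod _)).
move=> j a na; rewrite /actR /= -rmorphM; apply/mpow_img.
by exists (a * gn j); split => //; apply: idealpow_mul na (gn_npow j).
Qed.

Lemma top_bounded j : exists p, chains_bounded actR (mpow j) (mpow 0) p.
Proof.
elim: j => [|j [p Hp]]; first by exists 0%N; apply: chains_bounded0.
have [q Hq] := hR_bounded j; exists (q + p)%N.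
apply: (chains_bounded_trans actR_D (mpow_submod j) (@idealpowS_sub _ _ _)) => //.
- by move=> x _; apply: idealpow0.
- exact: mpow_submod.
Qed.

Lemma length_mpow j : mlength actR (mpow 0) (mpow j) = (\sum_(i < j) hR i)%N.
Proof.
elim: j => [|j IH].
  by rewrite big_ord0; apply: mlength0; try exact: mpow_submod.
have [q Hq] := hR_bounded j; have [p Hp] := top_bounded j.
rewrite big_ord_recr /= -IH addnC.
apply: (mlength_add actR_D (mpow_submod _) (mpow_submod _) (mpow_submod _) _ _ Hq Hp).
- exact: idealpowS_sub.
- by move=> x _; apply: idealpow0.
Qed.

Lemma socdeg_spec :
  (exists x, mpow (socdeg mR) x /\ x <> 0) /\ forall x, mpow (socdeg mR).+1 x -> x = 0.
Proof.
have [N HN] := npow_sub_I.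
have mN0 x : mpow N x -> x = 0 by move=> /mpow_img [y [/HN/pi_ker ? <-]].
have ex : exists l, (exists x, mpow l x /\ x <> 0) /\
                    forall k, (exists x, mpow k x /\ x <> 0) -> (k <= l)%N.
  apply: (natmax_exists (k0 := 0%N) (B := N)).
    by exists 1; split; [apply: idealpow0|apply/eqP; exact: oner_neq0].
  move=> k [x [hx nx]]; rewrite leqNgt; apply/negP => lt; apply/nx/mN0.
  exact: idealpow_antimono (ltnW lt) _ hx.
have [h1 h2] := natmax_spec ex; split => // x hx; apply: NNPP => nx.
by have := h2 _ (ex_intro _ x (conj hx nx)); rewrite ltnn.
Qed.

(* m^i <> m^(i+1) for i <= s: otherwise the powers of m would be stationary
   from i on, and m^(s+1) = 0 would force m^s = 0. *)
Lemma mpow_strict i : (i <= socdeg mR)%N -> exists y, mpow i y /\ ~ mpow i.+1 y.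
Proof.
move=> le; apply: NNPP => N.
have H : incl (mpow i) (mpow i.+1).
  by move=> y hy; apply: NNPP => ny; apply: N; exists y.
have [[x [hx nx]] h0] := socdeg_spec.
by apply/nx/h0/(idealpow_stable H (leqW le))/(idealpow_antimono le).
Qed.

Lemma hR_pos i : (i <= socdeg mR)%N -> (1 <= hR i)%N.
Proof.
move=> /mpow_strict [y [hy ny]]; have [p Hp] := hR_bounded i.
exact: (mlength_ge1 (mpow_submod _) (mpow_submod _) (@idealpowS_sub _ _ _) Hp hy ny).
Qed.

Lemma hR_vanish i : (socdeg mR < i)%N -> hR i = 0%N.
Proof.
move=> lt; have [_ h0] := socdeg_spec.
apply: mlength0; try exact: mpow_submod; first exact: idealpowS_sub.
move=> x hx; rewrite (h0 x (idealpow_antimono lt hx)).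
by case: (idealpow_ideal mR i.+1).
Qed.

Lemma length_R : mlength actR (fun _ => True) (fun y => y = 0) =
  (\sum_(i < (socdeg mR).+1) hR i)%N.
Proof.
rewrite -length_mpow; apply: mlength_ext => x; first by split => // _; apply: idealpow0.
have [_ h0] := socdeg_spec; split; last exact: h0.
by move=> ->; case: (idealpow_ideal mR (socdeg mR).+1).
Qed.

Lemma img_submod X : is_submod actS X -> is_submod actR (img X).
Proof.
move=> [X0 [XD [XN XM]]]; split; first by exists 0; rewrite rmorph0.
split; first by move=> x y [a [Xa <-]] [b [Xb <-]]; exists (a + b); rewrite rmorphD; auto.
split; first by move=> x [a [Xa <-]]; exists (- a); rewrite rmorphN; auto.
by move=> c x [a [Xa <-]]; exists (c * a); rewrite /actR rmorphM; split => //; apply: XM.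
Qed.

Lemma preimage_submod Y : is_submod actR Y -> is_submod actS (fun x => Y (pi x)).
Proof.
move=> [Y0 [YD [YN YM]]]; split; first by rewrite rmorph0.
split; first by move=> x y hx hy; rewrite rmorphD; auto.
split; first by move=> x hx; rewrite rmorphN; auto.
by move=> c x hx; rewrite /actS rmorphM; apply: YM.
Qed.

Lemma img_preimage X : is_submod actS X -> incl I X -> forall x, img X (pi x) <-> X x.
Proof.
move=> [X0 [XD [XN XM]]] IX x; split=> [[x' [Xx' e]]|Xx]; last by exists x.
have Ix : I (x - x') by apply/pi_ker; rewrite rmorphB e subrr.
by rewrite -(subrK x' x); apply: XD => //; apply: IX.
Qed.

Lemma length_correspondence K J : is_submod actS K -> is_submod actS J -> incl I K ->
  incl K J -> mlength actS J K = mlength actR (img J) (img K).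
Proof.
move=> sK sJ IK KJ; apply: natmax_ext => l; split.
  move=> [c sc]; have [[G _] _] := subchain_chain_in sc.
  have [c0 [cl [cs cst]]] := sc.
  exists (fun k => img (c k)); split.
    by move=> y; split => -[x [hx <-]]; exists x; split => //; apply/c0.
  split; first by move=> y; split => -[x [hx <-]]; exists x; split => //; apply/cl.
  split; first by move=> i le; apply/img_submod/cs.
  move=> i lt; have [h1 [x [h2 h3]]] := cst i lt; split.
    by move=> y [z [hz <-]]; exists z; split => //; apply: h1.
  exists (pi x); split; first by exists x.
  have [si [Ki _]] := G i (ltnW lt).
  by move/(img_preimage si (fun z hz => Ki _ (IK _ hz))).
move=> [d [d0 [dl [ds dst]]]].
exists (fun k x => d k (pi x)); split; first by move=> x; rewrite d0; apply: img_preimage.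
split; first by move=> x; rewrite dl; apply: img_preimage => // z /IK /KJ.
split; first by move=> i le; apply/preimage_submod/ds.
move=> i lt; have [h1 [y [h2 h3]]] := dst i lt; split; first by move=> x /h1.
by have [x ex] := pi_surj y; exists x; rewrite ex.
Qed.

Lemma hR_hilb i : incl I (npow i.+1) -> hR i = hilb n i.
Proof.
move=> Isub; rewrite /hilb /hR (@mlength_ext _ _ actR _ _ (img (npow i)) (img (npow i.+1))).
- rewrite -length_correspondence //; [exact: npow_submod|exact: npow_submod|].
  exact: idealpowS_sub.
- exact: mpow_img.
- exact: mpow_img.
Qed.

Lemma hilb_mR i : hilb mR i = hR i.
Proof. by apply: mlength_act => X; apply: submodR_ring. Qed.

Lemma npow_soc_sub_I : incl (npow (socdeg mR).+1) I.
Proof.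
move=> x hx; apply/pi_ker; have [_ h0] := socdeg_spec.
by apply: h0; apply/mpow_img; exists x.
Qed.

Lemma vS_cases : (incl I (npow (vS n I)) /\ forall k, incl I (npow k) -> (k <= vS n I)%N) \/
                 (vS n I = 0%N /\ forall k, incl I (npow k)).
Proof.
case: (classic (exists l, incl I (npow l) /\ forall k, incl I (npow k) -> (k <= l)%N)).
  by move=> ex; left; apply: natmax_spec ex.
move=> nex; right; split; first by rewrite /vS /natmax; case: excluded_middle_informative.
move=> k; apply: NNPP => nk; apply: nex.
apply: (natmax_exists (k0 := 0%N) (B := k)); first by move=> x _; apply: idealpow0.
move=> j hj; rewrite leqNgt; apply/negP => lt; apply: nk => x /hj.
exact: idealpow_antimono (ltnW lt) x.
Qed.

(* v <= s + 1: otherwise n^(s+1) <= I <= n^(s+2) would make the powers of n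
   stationary from s + 1 on. *)
Lemma vS_le : (vS n I <= (socdeg mR).+1)%N.
Proof.
case: vS_cases => [[Iv Hv]|[-> _]] //.
rewrite leqNgt; apply/negP => lt.
have H : incl (npow (socdeg mR).+1) (npow (socdeg mR).+2).
  by move=> x /npow_soc_sub_I /Iv; apply: idealpow_antimono.
suff /Hv : incl I (npow (vS n I).+1) by rewrite ltnn.
move=> x /Iv hx; apply: (idealpow_stable H (k := (vS n I).+1)); first exact/leqW/ltnW.
exact: idealpow_antimono (ltnW lt) _ hx.
Qed.

Lemma length_R_split : mlength actR (fun _ => True) (fun y => y = 0) =
  (\sum_(i < vS n I) hilb n i + \sum_(vS n I <= i < (socdeg mR).+1) hR i)%N.
Proof.
have -> : (\sum_(i < vS n I) hilb n i = \sum_(i < vS n I) hR i)%N.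
  case: vS_cases => [[Iv _]|[-> _]]; last by rewrite !big_ord0.
  apply: eq_bigr => i _; rewrite hR_hilb // => x /Iv.
  exact: idealpow_antimono (ltn_ord i) x.
by rewrite length_R -!(big_mkord xpredT) (big_cat_nat (n := vS n I)) //; apply: vS_le.
Qed.

Lemma sum_hR_ge a b : (b <= (socdeg mR).+1)%N -> (b - a <= \sum_(a <= i < b) hR i)%N.
Proof.
move=> bs; rewrite -[X in (X <= _)%N]muln1 -sum_nat_const_nat big_nat_cond.
rewrite [X in (_ <= X)%N]big_nat_cond; apply: leq_sum => i /andP [/andP [_ lt] _].
by apply: hR_pos; rewrite -ltnS (leq_trans lt).
Qed.

Lemma socdeg_bound :
  ((socdeg mR : int) <= (mlength actR (fun _ => True) (fun y => y = 0) : int)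
   - ((\sum_(i < vS n I) hilb n i)%N : int) + (vS n I : int) - 1)%R.
Proof. by rewrite length_R_split; have := sum_hR_ge (vS n I) (leqnn _); have := vS_le; lia. Qed.

(* h_R(i) = 1 for v <= i <= s: the common reformulation of the three
   conditions of the equality case. *)
Definition tail_one := forall i, (vS n I <= i <= socdeg mR)%N -> hR i = 1%N.

Lemma tail_sum_eq :
  (\sum_(vS n I <= i < (socdeg mR).+1) hR i = (socdeg mR).+1 - vS n I)%N <-> tail_one.
Proof.
split=> [E i /andP [vi is_]|H]; last first.
  rewrite -[X in _ = X]muln1 -sum_nat_const_nat; apply: eq_big_nat => i /andP [vi is_].
  by apply: H; rewrite vi.
apply/eqP; rewrite eqn_leq hR_pos // andbT leqNgt; apply/negP => lt2; move: E.
rewrite (big_cat_nat vi (leqW is_)) /= (@big_ltn _ _ _ i (socdeg mR).+1) //.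
by have := sum_hR_ge (vS n I) (leqW is_); have := sum_hR_ge i.+1 (leqnn _); lia.
Qed.

(* If m^v is principal with v > 0, every m^i with i >= v is principal, so
   m^i/m^(i+1) has length at most one. *)
Lemma hR_le1 i : mu (mpow (vS n I)) = 1%N -> (0 < vS n I)%N -> (vS n I <= i)%N ->
  (hR i <= 1)%N.
Proof.
move=> /mu1_principal [g Hg] v0 le.
have [x Hx] := principal_powers mR_ideal mR_proper mR_units v0 Hg le.
have xi : mpow i x by apply/Hx; exists 1; rewrite mul1r.
have nx s : n s -> mpow i.+1 (actR s x) by move=> ns; apply: idealpow_mul => //; exists s.
have Hb : chains_bounded actR (mpow i.+1) (mpow i) 1.
  apply: chains_bounded_ext (chains_bounded_cyclic actR_M actR_1 n_units (mpow_submod i.+1) nx).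
  - by move=> y; split.
  move=> y; split.
    move=> [b [a [hb ->]]]; have [_ [D M]] := idealpow_ideal mR i.
    by apply: D; [apply: idealpowS_sub|apply: M].
  move/Hx => [a ->]; have [c <-] := pi_surj a; exists 0, c.
  by split; [case: (idealpow_ideal mR i.+1)|rewrite add0r].
by have [_ _] := mlength_spec (mpow_submod _) (mpow_submod _) (@idealpowS_sub _ _ _) Hb.
Qed.

(* Conversely, h_R(v) = 1 with v <= s makes m^v principal: for x in
   m^v \ m^(v+1), m^v = (x) + m^(v+1) = (x) + m^(s+1) = (x). *)
Lemma mu1_of_hR v : (v <= socdeg mR)%N -> hR v = 1%N ->
  mu (mpow v) = 1%N.
Proof.
move=> le hv; have [x0 [h0 n0]] := mpow_strict le.
have [x0_ideal x0_submod] : is_ideal (principal_plus x0 (mpow v.+1)) /\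
    is_submod actR (principal_plus x0 (mpow v.+1)).
  by split; [|apply: ideal_submod]; apply/principal_plus_ideal/idealpow_ideal.
have cover : incl (mpow v) (principal_plus x0 (mpow v.+1)).
  move=> y hy; apply: NNPP => ny; have [p Hp] := hR_bounded v.
  suff : (2 <= hR v)%N by rewrite hv.
  apply: (mlength_ge2 (mpow_submod _) x0_submod (mpow_submod v) _ _ Hp _ n0 hy ny).
  - by move=> z hz; exists 0, z; rewrite mul0r add0r.
  - move=> z [r [z' [hz' ->]]]; have [_ [D M]] := idealpow_ideal mR v.
    by apply: D; [apply: M|apply: idealpowS_sub].
  - by exists 1, 0; rewrite mul1r addr0; split => //; case: (idealpow_ideal mR v.+1).
apply: (mu_principal (x := x0)) => [y|x00]; last first.
  by apply: n0; rewrite x00; case: (idealpow_ideal mR v.+1).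
split=> [/(idealpow_cover cover ((socdeg mR).+1 - v))|[r ->]].
  rewrite subnKC; last exact: leqW.
  by move=> [r [z [/(proj2 socdeg_spec) -> ->]]]; exists r; rewrite addr0.
by have [_ [_ M]] := idealpow_ideal mR v; apply: M.
Qed.

(* When I is not a power of n, the degenerate cases v = 0 and v = s + 1 are
   excluded. *)
Section NotAPower.
Hypothesis not_power : ~ (exists t, forall x, I x <-> idealpow n t x).

Lemma vS_max : incl I (npow (vS n I)) /\ forall k, incl I (npow k) -> (k <= vS n I)%N.
Proof.
case: vS_cases => // -[_ all]; exfalso; apply: not_power.
by have [N HN] := npow_sub_I; exists N => x; split; [apply: all|apply: HN].
Qed.

Lemma vS_pos : (0 < vS n I)%N.
Proof. by apply: (proj2 vS_max) => x /I_sub_n; apply: idealpow1. Qed.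

(* If v = s + 1, then n^(s+1) <= I <= n^v, so I = n^(s+1). *)
Lemma vS_le_socdeg : (vS n I <= socdeg mR)%N.
Proof.
have := vS_le; rewrite leq_eqVlt ltnS => /orP [/eqP e|//].
exfalso; apply: not_power; exists (socdeg mR).+1 => x; split; last exact: npow_soc_sub_I.
by rewrite -e; apply: (proj1 vS_max).
Qed.

Lemma equality_iff_tail_one :
  ((socdeg mR)%:Z = (mlength actR (fun _ => True) (fun y => y = 0))%:Z
     - (\sum_(i < vS n I) hilb n i)%:Z + (vS n I)%:Z - 1) <-> tail_one.
Proof. by rewrite length_R_split -tail_sum_eq; have := vS_le; split; lia. Qed.

Lemma mu1_iff_tail_one : mu (mpow (vS n I)) = 1%N <-> tail_one.
Proof.
split=> [mu1 i /andP [vi is_]|H]; last by apply/mu1_of_hR/H; rewrite ?vS_le_socdeg ?leqnn.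
by apply/eqP; rewrite eqn_leq hR_le1 ?vS_pos ?hR_pos.
Qed.

Lemma hilbert_iff_tail_one : tail_one <->
  forall i, ((i < vS n I)%N -> hilb mR i = hilb n i) /\
            ((vS n I <= i <= socdeg mR)%N -> hilb mR i = 1%N) /\
            ((socdeg mR < i)%N -> hilb mR i = 0%N).
Proof.
split=> [H i|H i hi]; last by rewrite -hilb_mR; apply: (proj1 (proj2 (H i))).
rewrite !hilb_mR; split; last by split; [apply: H|apply: hR_vanish].
by move=> lt; apply: hR_hilb => x /(proj1 vS_max); apply: idealpow_antimono.
Qed.

End NotAPower.
End Quotient.

Theorem theorem3p3 (S R : comNzRingType) (n I : S -> Prop) (pi : {rmorphism S -> R}) :
  noetherian S -> is_local n -> primary_to I n ->
  (* R = S/I : pi is surjective with kernel I *)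
  (forall y : R, exists x, pi x = y) -> (forall x, pi x = 0 <-> I x) ->
  let m : R -> Prop := fun y => exists x, n x /\ pi x = y in
  let v := vS n I in
  let s := socdeg m in
  let lenR := mlength (fun (a : S) (y : R) => pi a * y) (fun _ => True) (fun y => y = 0) in
  let eqn := (s%:Z = lenR%:Z - (\sum_(i < v) hilb n i)%:Z + v%:Z - 1) in
  (s%:Z <= lenR%:Z - (\sum_(i < v) hilb n i)%:Z + v%:Z - 1) /\
  (~ (exists t, forall x, I x <-> idealpow n t x) ->
     (eqn <-> mu (idealpow m v) = 1%N) /\
     (mu (idealpow m v) = 1%N <->
        forall i, ((i < v)%N -> hilb m i = hilb n i) /\
                  ((v <= i <= s)%N -> hilb m i = 1%N) /\
                  ((s < i)%N -> hilb m i = 0%N))).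
Proof.
move=> S_noetherian n_local I_primary pi_surj pi_ker m v s lenR eqn.
split; first exact: socdeg_bound.
move=> not_power; have mu1E := mu1_iff_tail_one S_noetherian n_local I_primary pi_surj pi_ker not_power.
split; first by rewrite mu1E; apply: equality_iff_tail_one.
by rewrite mu1E; apply: hilbert_iff_tail_one.
Qed.
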